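(* In the two-superobserver, two-friend extended Wigner's friend scenario (defined in the context), there exists a superobserver possibility set $S \subseteq \{0,1\}^2\times\{1,2\}^2$ that satisfies Possibilistic No-Signalling but admits no Possibilistic Local Friendliness model. That is, there is no set $T\subseteq\{0,1\}^4\times\{1,2\}^2$ that is a Possibilistic Local Friendliness model reproducing $S$.
   Context: Scenario. Two space-like separated superobservers, Alice and Bob, have friends Charlie and Debbie respectively. Each friend measures a system inside a sealed laboratory. - Charlie and Debbie record outcomes $C=c\in\{0,1\}$ and $D=d\in\{0,1\}$. - Alice chooses an intervention (setting) $X=x\in\{1,2\}$ and observes $A=a\in\{0,1\}$. Bob chooses $Y=y\in\{1,2\}$ and observes $B=b\in\{0,1\}$. - The setting $X=1$ means Alice opens Charlie's lab, asks for his result and sets $A=C$. The setting $Y=1$ means Bob asks Debbie and sets $B=D$. The settings $X=2$ and $Y=2$ are arbitrary other measurements. - Spacetime relations: $A$ lies in the future light cone of $X$, and $B$ lies in the future light cone of $Y$. $X$ is not in the past light cone of any of $B,Y,C,D$. $Y$ is not in the past light cone of any of $A,X,C,D$. Superobserver possibility set. This is a set $S$ of tuples $(a,b,x,y)$; its elements are the tuples called possible. $S$ satisfies Possibilistic No-Signalling (PNS) when both of the following hold: - For all $x,a$, whether some $b$ has $(a,b,x,y)\in S$ does not depend on $y$. - For all $y,b$, whether some $a$ has $(a,b,x,y)\in S$ does not depend on $x$. Possibilistic Local Friendliness (PLF) model. This is the conjunction of Absoluteness of Observed Events and Possibilistic Local Agency, formalized as follows. - Absoluteness of Observed Events (AOE):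 every observed event has a single absolute value. Accordingly, the model is a set $T$ of possible joint value assignments $(a,b,c,d,x,y)$ to all six variables. - Protocol constraint: every $t\in T$ with $x=1$ has $a=c$, and every $t\in T$ with $y=1$ has $b=d$. - A partial assignment $E$ (values for some subset of the variables) is called possible if it agrees with some element of $T$. - Possibilistic Local Agency (PLA): if $E$ is possible, then for any intervention $Z\in\{X,Y\}$ not in the past light cone of any variable assigned in $E$, and for every value $z$ of $Z$, the assignment $E$ together with $Z=z$ is possible. - Reproducing $S$: the projection of $T$ onto the coordinates $(a,b,x,y)$ equals $S$. *)

(* Outcomes a,b,c,d in {0,1} are encoded as bool (false = 0, true = 1).
   Settings x,y in {1,2} are encoded by the type [setting]. *)
Inductive setting : Type := s1 | s2.

Definition superobs_set := bool -> bool -> setting -> setting -> Prop.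

(* A model under AOE: a set of joint assignments (a,b,c,d,x,y). *)
Definition joint_set := bool -> bool -> bool -> bool -> setting -> setting -> Prop.

Definition PNS (S : superobs_set) : Prop :=
  (forall x a y y', (exists b, S a b x y) <-> (exists b, S a b x y')) /\
  (forall y b x x', (exists a, S a b x y) <-> (exists a, S a b x' y)).

Inductive var : Type := VA | VB | VC | VD | VX | VY.
Inductive intervention : Type := IX | IY.

(* From the scenario: X is in the past light cone of A (A is in the future
   light cone of X) and not of B,Y,C,D; Y is in the past light cone of B and
   not of A,X,C,D.  Each intervention is counted in its own past light cone
   (so PLA never re-assigns an already assigned intervention). *)
Definition in_past_LC (Z : intervention) (v : var) : Prop :=
  match Z, v with
  | IX, VA | IX, VX => True
  | IY, VB | IY, VY => True
  | _, _ => False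
  end.

Record passign : Type := PAssign {
  eA : option bool; eB : option bool; eC : option bool; eD : option bool;
  eX : option setting; eY : option setting }.

Definition assigned (E : passign) (v : var) : Prop :=
  match v with
  | VA => eA E <> None | VB => eB E <> None
  | VC => eC E <> None | VD => eD E <> None
  | VX => eX E <> None | VY => eY E <> None
  end.

Definition opt_agree {V : Type} (o : option V) (v : V) : Prop :=
  match o with None => True | Some w => w = v end.

Definition agrees (E : passign) a b c d x y : Prop :=
  opt_agree (eA E) a /\ opt_agree (eB E) b /\ opt_agree (eC E) c /\
  opt_agree (eD E) d /\ opt_agree (eX E) x /\ opt_agree (eY E) y.

Definition possible (T : joint_set) (E : passign) : Prop :=
  exists a b c d x y, T a b c d x y /\ agrees E a b c d x y.

Definition set_int (E : passign) (Z : intervention) (z : setting) : passign :=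
  match Z with
  | IX => PAssign (eA E) (eB E) (eC E) (eD E) (Some z) (eY E)
  | IY => PAssign (eA E) (eB E) (eC E) (eD E) (eX E) (Some z)
  end.

Definition PLA (T : joint_set) : Prop :=
  forall (E : passign) (Z : intervention),
    possible T E ->
    (forall v, assigned E v -> ~ in_past_LC Z v) ->
    forall z, possible T (set_int E Z z).

Definition protocol (T : joint_set) : Prop :=
  forall a b c d x y, T a b c d x y ->
    (x = s1 -> a = c) /\ (y = s1 -> b = d).

(* PLF model (AOE is built into the type of T). *)
Definition PLF_model (T : joint_set) : Prop := protocol T /\ PLA T.

Definition reproduces (T : joint_set) (S : superobs_set) : Prop :=
  forall a b x y, S a b x y <-> exists c d, T a b c d x y.


(* In a PLF model, start from an event with x = y = 1, so that a = c = 0 and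
   b = d = 0.  Local agency lets Alice switch to x = 2 without disturbing
   (b, c, d); the PR box then forces a = b = 0.  Bob may next switch to
   y = 2 without disturbing (a, c, d), forcing b = 1.  Finally Alice switches
   back to x = 1 without disturbing (b, c, d): now a = c = 0 while the PR box
   demands a = b = 1. *)

Definition both_s2 (x y : setting) : bool :=
  match x, y with s2, s2 => true | _, _ => false end.

Definition pr_box_support : superobs_set :=
  fun a b x y => xorb a b = both_s2 x y.

Lemma PNS_of_total_marginals (S : superobs_set) :
  (forall a x y, exists b, S a b x y) ->
  (forall b x y, exists a, S a b x y) ->
  PNS S.
Proof.
  intros HA HB; split; intros; split; intros _; auto.
Qed.

Lemma PNS_pr_box_support : PNS pr_box_support.
Proof.
  apply PNS_of_total_marginals; intros a x y.
  - exists (xorb a (both_s2 x y)); unfold pr_box_support.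
    destruct a, (both_s2 x y); reflexivity.
  - exists (xorb a (both_s2 x y)); unfold pr_box_support.
    destruct a, (both_s2 x y); reflexivity.
Qed.

Section PLF_model_facts.

Variable T : joint_set.
Hypothesis T_PLA : PLA T.

Lemma PLA_switch_X a b c d x y z :
  T a b c d x y -> exists a', T a' b c d z y.
Proof.
  intros HT.
  assert (Hposs : possible T
    (set_int (PAssign None (Some b) (Some c) (Some d) None (Some y)) IX z)).
  { apply T_PLA.
    - exists a, b, c, d, x, y; repeat split; assumption.
    - intros [] Hv; simpl in *; tauto. }
  destruct Hposs as (a' & b' & c' & d' & x' & y' & HT' & Hag).
  destruct Hag as (_ & -> & -> & -> & -> & ->); simpl; eauto.
Qed.

Lemma PLA_switch_Y a b c d x y z :
  T a b c d x y -> exists b', T a b' c d x z.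
Proof.
  intros HT.
  assert (Hposs : possible T
    (set_int (PAssign (Some a) None (Some c) (Some d) (Some x) None) IY z)).
  { apply T_PLA.
    - exists a, b, c, d, x, y; repeat split; assumption.
    - intros [] Hv; simpl in *; tauto. }
  destruct Hposs as (a' & b' & c' & d' & x' & y' & HT' & Hag).
  destruct Hag as (-> & _ & -> & -> & -> & ->); simpl; eauto.
Qed.

End PLF_model_facts.

Lemma no_PLF_model_pr_box_support (T : joint_set) :
  PLF_model T -> ~ reproduces T pr_box_support.
Proof.
  intros [Hprot Hpla] Hrep.
  assert (Hsupp : forall a b c d x y,
            T a b c d x y -> xorb a b = both_s2 x y)
    by (intros a b c d x y HT; apply Hrep; eauto).
  destruct (proj1 (Hrep false false s1 s1) eq_refl) as (c & d & H11).
  destruct (Hprot _ _ _ _ _ _ H11) as [Hc Hd].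
  rewrite <- (Hc eq_refl) in H11; rewrite <- (Hd eq_refl) in H11.
  destruct (PLA_switch_X T Hpla _ _ _ _ _ _ s2 H11) as (a & H21).
  assert (a = false) as ->
    by (specialize (Hsupp _ _ _ _ _ _ H21); destruct a; easy).
  destruct (PLA_switch_Y T Hpla _ _ _ _ _ _ s2 H21) as (b & H22).
  assert (b = true) as ->
    by (specialize (Hsupp _ _ _ _ _ _ H22); destruct b; easy).
  destruct (PLA_switch_X T Hpla _ _ _ _ _ _ s1 H22) as (a & H12).
  rewrite (proj1 (Hprot _ _ _ _ _ _ H12) eq_refl) in H12.
  discriminate (Hsupp _ _ _ _ _ _ H12).
Qed.

Theorem theorem4 :
  exists S : superobs_set,
    PNS S /\ ~ (exists T : joint_set, PLF_model T /\ reproduces T S).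
Proof.
  exists pr_box_support; split.
  - exact PNS_pr_box_support.
  - intros (T & HT & Hrep); exact (no_PLF_model_pr_box_support T HT Hrep).
Qed.
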